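(* Let $U_2$ be a unitary matrix with real entries having a unique (up to scalars) eigenvector $|\phi_0\rangle$ of eigenvalue $1$, chosen with real entries and norm $1$; let $|\mu\rangle$ be a unit vector with real entries, $U_1=I-2|\mu\rangle\langle\mu|$ and $U=U_2U_1$. Let $\varepsilon\in(0,1)$. For every $T\ge\max\{1,\mathsf{QHT}_\varepsilon(U_2,|\mu\rangle)\}$, the procedure $\mathbf{MainDetect}(U_2,|\mu\rangle,1/T,\varepsilon)$ accepts $|\phi_0\rangle$ with probability $1-O(\varepsilon)$ if $\langle\phi_0|\mu\rangle\ne0$, and accepts with probability $0$ otherwise.
   Context: Let $|\tilde\phi_0\rangle=|\phi_0\rangle-\langle\mu|\phi_0\rangle|\mu\rangle$, decomposed in eigenvectors of $U$ as $|\tilde\phi_0\rangle=\delta_0|w_0\rangle+\sum_j\delta_j(|w_j^+\rangle+|w_j^-\rangle)+\delta_{-1}|w_{-1}\rangle$ with real coefficients ($|w_0\rangle,|w_{-1}\rangle$ unit eigenvectors of eigenvalues $\pm1$; $|w_j^\pm\rangle$ unit eigenvectors of eigenvalues $e^{\pm i\alpha_j}$, $0<\alpha_j<\pi$, $|w_j^-\rangle=\overline{|w_j^+\rangle}$). $\mathit{QH}$ takes value $1/\alpha_j$ with probability $2\delta_j^2$, $1/\pi$ with probability $\delta_{-1}^2$, and $0$ otherwise; $\mathsf{QHT}_\varepsilon(U_2,|\mu\rangle)=\min\{y:\Pr[\mathit{QH}>y]\le\varepsilon\}$. $\mathbf{Estimate}$ is the standard phase estimation circuit for $U$ with precision $\Delta$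 (outputs an eigenphase within $\Delta$ with error probability at most $1/3$, outputs $0$ with certainty on $1$-eigenvectors, uses $O(1/\Delta)$ calls to $\text{c-}U$ and its inverse). $\mathbf{Detect}(U,\Delta,\varepsilon)$: apply $\Theta(\log(1/\varepsilon))$ times $\mathbf{Estimate}$ with precision $\Delta$ to the same input state; accept iff at least one estimated phase is nonzero. $\mathbf{MainDetect}(U_2,|\mu\rangle,\Delta,\varepsilon)$ on input $|\psi\rangle$: measure according to the decomposition $(|\mu\rangle,|\mu\rangle^\perp)$; if the outcome is $|\mu\rangle$, accept; otherwise apply $\mathbf{Detect}(U,\Delta,\varepsilon)$ to the resulting state. *)

From mathcomp Require Import all_boot all_order all_algebra complex.
From mathcomp Require Import all_classical all_reals all_analysis.
Set Implicit Arguments. Unset Strict Implicit. Unset Printing Implicit Defensive.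
Import Order.TTheory GRing.Theory Num.Theory.
Local Open Scope ring_scope.

Section QuantumDefs.
Variable R : realType.
Local Notation C := (R[i]).

Definition toC (x : R) : C := Complex x 0.
Definition cconj (z : C) : C := Complex (complex.Re z) (- complex.Im z).
Definition nsq (z : C) : R := complex.Re z ^+ 2 + complex.Im z ^+ 2.
Definition expi (t : R) : C := Complex (cos t) (sin t).

Definition vnorm2 n (v : 'cV[C]_n) : R := \sum_i nsq (v i 0).
Definition adj m n (A : 'M[C]_(m, n)) : 'M[C]_(n, m) := (map_mx cconj A)^T.
Definition rdot n (u v : 'cV[R]_n) : R := (u^T *m v) 0 0.

Definition U1 n (mu : 'cV[R]_n) : 'M[R]_n := 1%:M - 2 *: (mu *m mu^T).

Definition phitilde n (phi0 mu : 'cV[R]_n) : 'cV[R]_n :=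
  phi0 - rdot mu phi0 *: mu.

(* An orthonormal eigenbasis of U is given by the columns of a unitary W,
   with U W = W diag(e^{i theta_k}), theta_k in (-pi, pi].
   weight k = squared coefficient of |phi~_0> on the k-th eigenvector. *)
Definition weight n (W : 'M[C]_n) (phi0 mu : 'cV[R]_n) (k : 'I_n) : R :=
  nsq ((adj W *m map_mx toC (phitilde phi0 mu)) k 0).

(* Pr[QH > y]: QH = 1/alpha_j (i.e. 1/|theta_k|, theta_k = +-alpha_j) or
   1/pi (theta_k = pi) with the corresponding weights, and 0 otherwise. *)
Definition PrQH_gt n (W : 'M[C]_n) (theta : 'I_n -> R) (phi0 mu : 'cV[R]_n)
    (y : R) : R :=
  \sum_(k | theta k != 0) weight W phi0 mu k * (if y < `|theta k|^-1 then 1 else 0)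
  + (1 - \sum_(k | theta k != 0) weight W phi0 mu k) * (if y < 0 then 1 else 0).

Definition QHT n (W : 'M[C]_n) (theta : 'I_n -> R) (phi0 mu : 'cV[R]_n)
    (eps : R) : R :=
  inf [set y | PrQH_gt W theta phi0 mu y <= eps]%classic.

Definition cdist (a b : R) : R := Num.min `|a - b| (2 * pi - `|a - b|).

(* Abstract phase-estimation circuit with precision Delta: on an eigenvector
   of eigenphase t it produces outcome y (estimated phase out y) with
   amplitude amp t y. *)
Definition is_estimator (Y : finType) (out : Y -> R) (amp : R -> Y -> C)
    (Delta : R) : Prop :=
  (forall y, - pi < out y <= pi) /\
  (forall t, - pi < t <= pi ->
     \sum_y nsq (amp t y) = 1 /\
     \sum_(y | Delta <= cdist (out y) t) nsq (amp t y) <= 3^-1) /\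
  \sum_(y | out y == 0) nsq (amp 0 y) = 1.

(* Kraus operator of outcome y of Estimate: sum_k amp(theta_k, y) |w_k><w_k| *)
Definition kraus n (W : 'M[C]_n) (theta : 'I_n -> R) (Y : finType)
    (amp : R -> Y -> C) (y : Y) : 'M[C]_n :=
  W *m diag_mx (\row_k amp (theta k) y) *m adj W.

Definition run_seq n (W : 'M[C]_n) (theta : 'I_n -> R) (Y : finType)
    (amp : R -> Y -> C) (s : seq Y) (psi : 'cV[C]_n) : 'cV[C]_n :=
  foldl (fun v y => kraus W theta amp y *m v) psi s.

(* Acceptance probability of MainDetect(U_2, |mu>, Delta, eps) on input
   |phi_0>, where Detect uses m applications of Estimate:
   outcome |mu> (accept) or outcome mu-perp followed by m estimates,
   accepting iff at least one estimated phase is nonzero. *)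
Definition mainDetect_accept n (W : 'M[C]_n) (theta : 'I_n -> R)
    (Y : finType) (out : Y -> R) (amp : R -> Y -> C) (m : nat)
    (phi0 mu : 'cV[R]_n) : R :=
  vnorm2 (map_mx toC (mu *m mu^T *m phi0))
  + \sum_(s : m.-tuple Y | has (fun y => out y != 0) s)
      vnorm2 (run_seq W theta amp s
                (map_mx toC ((1%:M - mu *m mu^T) *m phi0))).

End QuantumDefs.

From mathcomp Require Import all_boot all_order all_algebra complex.
From mathcomp Require Import all_classical all_reals all_analysis.
From mathcomp Require Import ring lra.
Import Order.TTheory GRing.Theory Num.Theory.
Local Open Scope ring_scope.
Set Implicit Arguments. Unset Strict Implicit.

(* Expand the component of |phi_0> orthogonal to |mu> in the eigenbasis (w_k)
   of U = U_2 U_1.  Every run of Estimate acts diagonally in that basis, so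
   Detect sees only zero phases with probability p_k^m on w_k, where p_k is the
   probability that Estimate outputs 0 on eigenphase theta_k; hence MainDetect
   rejects with probability sum_k |<w_k|phi~_0>|^2 p_k^m.
   If <phi_0|mu> = 0, then |phi_0> is a 1-eigenvector of U, so only eigenphases
   theta_k = 0 carry weight and there p_k = 1: MainDetect never accepts.
   Otherwise U has no eigenvalue 1.  Eigenphases with |theta_k| >= 1/T give
   p_k <= 1/3 and contribute at most 3^-m <= eps, while by definition of
   QHT the eigenphases with |theta_k| < 1/T carry total weight at most eps. *)

Lemma sum_tuple_prod (R : pzSemiRingType) (Y : finType) (f : Y -> R) m :
  \sum_(s : m.-tuple Y) \prod_(y <- s) f y = (\sum_y f y) ^+ m.
Proof.
elim: m => [|m IHm].
  rewrite expr0 (big_pred1 [tuple]) ?big_nil // => s /=.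
  by symmetry; apply/eqP; apply: tuple0.
rewrite exprS -IHm big_distrl /=.
transitivity (\sum_(p : Y * m.-tuple Y) f p.1 * \prod_(y <- p.2) f y).
  rewrite (reindex (fun p : Y * m.-tuple Y => cons_tuple p.1 p.2)) /=.
    by apply: eq_bigr => p _; rewrite big_cons.
  apply: onW_bij; exists (fun t => (thead t, behead_tuple t)).
    by case=> y t /=; rewrite theadE; congr pair; apply: val_inj.
  by move=> t /=; apply: val_inj => /=; rewrite [in RHS](tuple_eta t).
under [in RHS]eq_bigr do rewrite big_distrr.
by rewrite pair_big.
Qed.

Lemma sum_tuple_has_prod (R : pzRingType) (Y : finType) (P : pred Y)
    (f : Y -> R) m :
  \sum_(s : m.-tuple Y | has P s) \prod_(y <- s) f y
  = (\sum_y f y) ^+ m - (\sum_(y | ~~ P y) f y) ^+ m.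
Proof.
have prod_mask (s : seq Y) : \prod_(y <- s) (if ~~ P y then f y else 0) =
    if has P s then 0 else \prod_(y <- s) f y.
  elim: s => [|y s IHs]; rewrite ?big_nil ?big_cons //= IHs.
  by case: (P y); case: has; rewrite /= ?mul0r ?mulr0.
have sum_hasN : \sum_(s : m.-tuple Y | ~~ has P s) \prod_(y <- s) f y
    = (\sum_(y | ~~ P y) f y) ^+ m.
  rewrite [in RHS]big_mkcond -sum_tuple_prod [LHS]big_mkcond /=.
  by apply: eq_bigr => s _; rewrite prod_mask; case: has.
rewrite -sum_hasN -sum_tuple_prod.
by rewrite (bigID (fun s : m.-tuple Y => has P s) xpredT) addrK.
Qed.

Lemma ler_sum_subset (R : numDomainType) (I : finType) (P Q : pred I)
    (F : I -> R) :
  (forall i, P i -> Q i) -> (forall i, 0 <= F i) ->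
  \sum_(i | P i) F i <= \sum_(i | Q i) F i.
Proof.
move=> PQ F_ge0; rewrite [leRHS]big_mkcond [leLHS]big_mkcond /=.
by apply: ler_sum => i _; case: ifP => [/PQ ->|_] //; case: ifP.
Qed.

Lemma weighted_expr_le (R : realDomainType) (w p c : R) (b : bool) m :
  0 <= w -> 0 <= p <= 1 -> 0 <= c -> (~~ b -> p <= c) ->
  w * p ^+ m <= w * (if b then 1 else 0) + w * c ^+ m.
Proof.
move=> w_ge0 /andP[p_ge0 p_le1] c_ge0; case: b => [_ | /(_ isT) p_le_c].
  by rewrite mulr1 -[leLHS]addr0 lerD ?ler_piMr ?exprn_ile1 ?mulr_ge0 ?exprn_ge0.
by rewrite mulr0 add0r ler_wpM2l // lerXn2r.
Qed.

Section Complex.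
Variable R : realType.
Local Notation C := (R[i]).

Lemma mulJc_nsq (z : C) : conjc z * z = toC (nsq z).
Proof. by case: z => a b; rewrite /toC /nsq /=; simpc; congr Complex; ring. Qed.

Lemma nsqM (x y : C) : nsq (x * y) = nsq x * nsq y.
Proof. by case: x => a b; case: y => c d; rewrite /nsq /=; ring. Qed.

Lemma nsq_ge0 (z : C) : 0 <= nsq z.
Proof. by rewrite /nsq addr_ge0 // sqr_ge0. Qed.

Lemma nsq0 : nsq (0 : C) = 0.
Proof. by rewrite /nsq /= expr0n /= addr0. Qed.

Lemma nsq_prod (I : Type) (r : seq I) (F : I -> C) :
  nsq (\prod_(i <- r) F i) = \prod_(i <- r) nsq (F i).
Proof.
elim: r => [|a r IHr]; rewrite ?big_nil ?big_cons ?nsqM ?IHr //.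
by rewrite /nsq /= expr1n expr0n /= addr0.
Qed.

Lemma toCE : @toC R = real_complex R. Proof. by []. Qed.

Lemma toC_sum (I : Type) (r : seq I) (F : I -> R) :
  toC (\sum_(i <- r) F i) = \sum_(i <- r) toC (F i).
Proof. by rewrite toCE raddf_sum. Qed.

Lemma map_toCM m n p (A : 'M[R]_(m, n)) (B : 'M[R]_(n, p)) :
  map_mx (@toC R) (A *m B) = map_mx (@toC R) A *m map_mx (@toC R) B.
Proof. by rewrite toCE map_mxM. Qed.

Lemma map_Re_toCM m n p (A : 'M[R]_(m, n)) (v : 'M[C]_(n, p)) :
  map_mx (@complex.Re R) (map_mx (@toC R) A *m v) = A *m map_mx (@complex.Re R) v.
Proof.
apply/matrixP => i j; rewrite !mxE (raddf_sum (@complex.Re R : Rcomplex R -> R)).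
by apply: eq_bigr => l _; rewrite !mxE; case: (v l j) => a b /=; ring.
Qed.

Lemma map_Im_toCM m n p (A : 'M[R]_(m, n)) (v : 'M[C]_(n, p)) :
  map_mx (@complex.Im R) (map_mx (@toC R) A *m v) = A *m map_mx (@complex.Im R) v.
Proof.
apply/matrixP => i j; rewrite !mxE (raddf_sum (@complex.Im R : Rcomplex R -> R)).
by apply: eq_bigr => l _; rewrite !mxE; case: (v l j) => a b /=; ring.
Qed.

Lemma adjE m n (A : 'M[C]_(m, n)) : adj A = (map_mx conjc A)^T.
Proof. by congr trmx; apply/matrixP => i j; rewrite !mxE; case: (A i j). Qed.

Lemma adjM m n p (A : 'M[C]_(m, n)) (B : 'M[C]_(n, p)) :
  adj (A *m B) = adj B *m adj A.
Proof. by rewrite !adjE map_mxM trmx_mul. Qed.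

Lemma vnorm2E n (v : 'cV[C]_n) : toC (vnorm2 v) = (adj v *m v) 0 0.
Proof.
rewrite /vnorm2 toC_sum mxE; apply: eq_bigr => i _.
by rewrite -mulJc_nsq adjE !mxE.
Qed.

Lemma vnorm2_isometry n (W : 'M[C]_n) (v : 'cV[C]_n) :
  adj W *m W = 1%:M -> vnorm2 (W *m v) = vnorm2 v.
Proof.
move=> W_unitary; apply: (@complexI R); rewrite -!toCE !vnorm2E adjM.
by rewrite -mulmxA (mulmxA (adj W)) W_unitary mul1mx.
Qed.

Lemma vnorm2_toC n (x : 'cV[R]_n) : vnorm2 (map_mx (@toC R) x) = (x^T *m x) 0 0.
Proof.
rewrite /vnorm2 mxE; apply: eq_bigr => i _.
by rewrite !mxE /nsq /= expr2 expr0n /= addr0.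
Qed.

Lemma vnorm2_col n (d b : 'I_n -> C) :
  vnorm2 (\col_k (d k * b k)) = \sum_k nsq (d k) * nsq (b k).
Proof. by apply: eq_bigr => k _; rewrite mxE nsqM. Qed.

Lemma expi0 : expi 0 = 1 :> C.
Proof. by rewrite /expi cos0 sin0. Qed.

Lemma expi_eq1 (t : R) : - pi < t <= pi -> expi t = 1 -> t = 0.
Proof.
move=> /andP[t_gt t_le] [cos_t _].
have t_norm : `|t| \in `[0, pi] by rewrite in_itv /= normr_ge0 ler_norml t_le ltW.
have zero_in : (0 : R) \in `[0, pi] by rewrite in_itv /= lexx pi_ge0.
have : cos `|t| = cos 0 by rewrite cos0; case: (ler0P t); rewrite ?cosN.
by move/(cos_inj t_norm zero_in)/normr0_eq0.
Qed.

End Complex.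

Section RealVectors.
Variables (R : realType) (n : nat).
Implicit Types (u v phi mu : 'cV[R]_n).

Lemma rdotC u v : rdot u v = rdot v u.
Proof. by rewrite /rdot !mxE; apply: eq_bigr => i _; rewrite !mxE mulrC. Qed.

Lemma rdot_mx u v : u^T *m v = (rdot u v)%:M.
Proof. by apply/matrixP => i j; rewrite !ord1 [RHS]mxE. Qed.

Lemma rdotZr u v (c : R) : rdot u (c *: v) = c * rdot u v.
Proof. by rewrite /rdot -scalemxAr mxE. Qed.

Lemma rdot_subZr u v w (c : R) : rdot u (v - c *: w) = rdot u v - c * rdot u w.
Proof. by rewrite /rdot mulmxBr -scalemxAr !mxE. Qed.

Lemma U1_apply mu v : U1 mu *m v = v - (2 * rdot mu v) *: mu.
Proof.
by rewrite /U1 mulmxBl mul1mx -scalemxAl -mulmxA rdot_mx mul_mx_scalar scalerA.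
Qed.

Lemma phitildeE phi mu : phitilde phi mu = (1%:M - mu *m mu^T) *m phi.
Proof. by rewrite /phitilde mulmxBl mul1mx -mulmxA rdot_mx mul_mx_scalar. Qed.

Lemma projection_pythagoras phi mu : mu^T *m mu = 1%:M ->
  ((mu *m mu^T *m phi)^T *m (mu *m mu^T *m phi)) 0 0 +
  (((1%:M - mu *m mu^T) *m phi)^T *m ((1%:M - mu *m mu^T) *m phi)) 0 0
  = (phi^T *m phi) 0 0.
Proof.
move=> mu_unit; set x := mu *m mu^T *m phi.
have xx : x^T *m x = x^T *m phi.
  rewrite /x !trmx_mul trmxK -!mulmxA; congr (_ *m _); congr (_ *m _).
  by rewrite !mulmxA mu_unit mul1mx.
have phix : phi^T *m x = x^T *m phi by rewrite !rdot_mx rdotC.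
rewrite mulmxBl mul1mx -/x (linearB trmx) mulmxBl !mulmxBr xx phix subrr subr0.
by rewrite !mxE; ring.
Qed.

Lemma U2U1_fixed_eq0 (U2 : 'M[R]_n) phi mu v :
  U2^T *m U2 = 1%:M -> U2 *m phi = phi ->
  (forall v : 'cV[R]_n, U2 *m v = v -> exists a : R, v = a *: phi) ->
  rdot mu phi != 0 -> U2 *m U1 mu *m v = v -> v = 0.
Proof.
move=> U2_orth U2_phi fixed_U2 mu_phi Uv.
have phi_U2 : phi^T *m U2 = phi^T.
  by rewrite -{1}U2_phi trmx_mul -mulmxA U2_orth mulmx1.
have mu_v : rdot mu v = 0.
  have : rdot phi v = rdot phi (U1 mu *m v).
    by rewrite /rdot -{1}Uv !mulmxA phi_U2.
  rewrite U1_apply rdot_subZr => /eqP; rewrite -subr_eq0 opprB addrC subrK.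
  by rewrite [rdot phi mu]rdotC !mulf_eq0 pnatr_eq0 (negbTE mu_phi) orbF => /eqP.
have [a v_phi] : exists a : R, v = a *: phi.
  by apply: fixed_U2; rewrite -{2}Uv -mulmxA U1_apply mu_v mulr0 scale0r subr0.
move: mu_v; rewrite v_phi rdotZr => /eqP.
by rewrite mulf_eq0 (negbTE mu_phi) orbF => /eqP ->; rewrite scale0r.
Qed.

Lemma orth_U2U1_fixed (U2 : 'M[R]_n) phi mu :
  U2 *m phi = phi -> rdot mu phi = 0 -> U2 *m U1 mu *m phi = phi.
Proof.
by move=> U2_phi mu_phi; rewrite -mulmxA U1_apply mu_phi mulr0 scale0r subr0.
Qed.

End RealVectors.

Section Eigenbasis.
Variables (R : realType) (n : nat) (W : 'M[R[i]]_n) (theta : 'I_n -> R).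
Hypothesis W_unitary : adj W *m W = 1%:M.
Local Notation D := (diag_mx (\row_k expi (theta k))).

Lemma eigencoord_fixed (Uc : 'M[R[i]]_n) (psi : 'cV[R[i]]_n) k :
  Uc *m W = W *m D -> Uc *m psi = psi -> (adj W *m psi) k 0 != 0 ->
  expi (theta k) = 1.
Proof.
move=> UcW Upsi psi_k.
have adjW_Uc : adj W *m Uc = D *m adj W.
  rewrite -[adj W *m Uc]mulmx1 -(mulmx1C W_unitary) mulmxA -(mulmxA (adj W)).
  by rewrite UcW mulmxA W_unitary mul1mx.
have : (D *m (adj W *m psi)) k 0 = (adj W *m psi) k 0.
  by rewrite mulmxA -adjW_Uc -mulmxA Upsi.
set a := adj W *m psi in psi_k *.
rewrite mul_diag_mx mxE => /eqP; rewrite -subr_eq0 -{2}[a k 0]mul1r -mulrBl.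
by rewrite mulf_eq0 (negbTE psi_k) orbF subr_eq0 mxE => /eqP.
Qed.

Lemma eigenphase_neq0 (U : 'M[R]_n) k :
  map_mx (@toC R) U *m W = W *m D ->
  (forall v : 'cV[R]_n, U *m v = v -> v = 0) -> theta k != 0.
Proof.
move=> UW fixed_U; apply/eqP => theta_k.
have Uw : map_mx (@toC R) U *m col k W = col k W.
  rewrite !colE mulmxA UW; apply/matrixP => i j.
  by rewrite -!colE [LHS]mxE mul_mx_diag !mxE theta_k expi0 mulr1.
have Re_w : map_mx (@complex.Re R) (col k W) = 0.
  by apply: fixed_U; rewrite -map_Re_toCM Uw.
have Im_w : map_mx (@complex.Im R) (col k W) = 0.
  by apply: fixed_U; rewrite -map_Im_toCM Uw.
have w0 j : W j k = 0.
  move: (congr1 (fun v : 'cV[R]_n => v j 0) Re_w).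
  move: (congr1 (fun v : 'cV[R]_n => v j 0) Im_w).
  by rewrite !mxE; case: (W j k) => a b /= -> ->.
have := congr1 (fun M : 'M[R[i]]_n => M k k) W_unitary; rewrite !mxE eqxx /=.
rewrite big1 => [/eqP|j _]; first by rewrite eq_sym oner_eq0.
by rewrite mxE w0 mulr0.
Qed.

Lemma unitary_expand (v : 'cV[R[i]]_n) : W *m (adj W *m v) = v.
Proof. by rewrite mulmxA (mulmx1C W_unitary) mul1mx. Qed.

Lemma run_seqE (Y : finType) (amp : R -> Y -> R[i]) (s : seq Y)
    (b : 'cV[R[i]]_n) :
  run_seq W theta amp s (W *m b) =
    W *m \col_k ((\prod_(y <- s) amp (theta k) y) * b k 0).
Proof.
elim: s b => [|y s IHs] b /=.
  by congr (_ *m _); apply/matrixP => i j; rewrite !mxE big_nil mul1r ord1.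
rewrite /run_seq /= -/(run_seq _ _ _ _ _).
have -> : kraus W theta amp y *m (W *m b) =
    W *m \col_k (amp (theta k) y * b k 0).
  rewrite /kraus -!mulmxA (mulmxA (adj W)) W_unitary mul1mx.
  by congr (_ *m _); apply/matrixP => i j; rewrite mul_diag_mx !mxE ord1.
rewrite IHs; congr (_ *m _); apply/matrixP => i j.
by rewrite !mxE big_cons mulrCA mulrA.
Qed.

End Eigenbasis.

Section QuantumHittingTime.
Variables (R : realType) (n : nat) (W : 'M[R[i]]_n) (theta : 'I_n -> R).
Variables (phi0 mu : 'cV[R]_n).
Local Notation w := (weight W phi0 mu).

Lemma weight_ge0 k : 0 <= w k.
Proof. exact: nsq_ge0. Qed.

Lemma QHT_tail_le (eps T : R) :
  (forall k, theta k != 0) -> \sum_k w k <= 1 -> 0 <= eps ->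
  QHT W theta phi0 mu eps <= T ->
  \sum_k w k * (if T < `|theta k|^-1 then 1 else 0) <= eps.
Proof.
move=> theta_neq0 w_le1 eps_ge0 QHT_le.
have sum_all (F : 'I_n -> R) : \sum_(k | theta k != 0) F k = \sum_k F k.
  by apply: eq_bigl => k; rewrite theta_neq0.
have PrQH_ge y : \sum_k w k * (if y < `|theta k|^-1 then 1 else 0)
    <= PrQH_gt W theta phi0 mu y.
  by rewrite /PrQH_gt !sum_all lerDl mulr_ge0 ?subr_ge0 //; case: ifP.
have S_ne : ([set y | PrQH_gt W theta phi0 mu y <= eps] !=set0)%classic.
  exists (\sum_k `|theta k|^-1); rewrite /= /PrQH_gt !sum_all.
  have inv_le j : `|theta j|^-1 <= \sum_k `|theta k|^-1.
    by rewrite (bigD1 j) //= lerDl sumr_ge0 // => k _; rewrite invr_ge0.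
  have sum_ge0 : 0 <= \sum_k `|theta k|^-1.
    by apply: sumr_ge0 => k _; rewrite invr_ge0.
  rewrite big1 => [|k _]; last by rewrite ltNge inv_le mulr0.
  by rewrite ltNge sum_ge0 /= mulr0 addr0.
(* [M] is the least [1 / |theta_k|] exceeding [T]; a point [y < M] of the set
   whose infimum is QHT counts every eigenphase that [T] counts. *)
pose M := \big[Order.min/T + 1]_(k | T < `|theta k|^-1) `|theta k|^-1.
have T_lt_M : T < M by apply: lt_bigmin => [|k //]; rewrite ltrDl ltr01.
have [y /= PrQH_y y_lt_M] := inf_lt S_ne (le_lt_trans QHT_le T_lt_M).
apply: le_trans (le_trans (PrQH_ge y) PrQH_y); apply: ler_sum => k _.
case: ifP => [T_lt|_]; last by rewrite mulr0 mulr_ge0 ?weight_ge0 //; case: ifP.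
by rewrite (lt_le_trans y_lt_M) // /M (bigmin_le_cond _ _ T_lt).
Qed.

End QuantumHittingTime.

Section Estimator.
Variables (R : realType) (Y : finType) (out : Y -> R) (amp : R -> Y -> R[i]).
Variable Delta : R.
Hypothesis estimator : is_estimator out amp Delta.

Definition zero_prob (t : R) : R := \sum_(y | out y == 0) nsq (amp t y).

Lemma zero_prob_ge0 t : 0 <= zero_prob t.
Proof. by apply: sumr_ge0 => y _; apply: nsq_ge0. Qed.

Lemma estimator_total t : - pi < t <= pi -> \sum_y nsq (amp t y) = 1.
Proof. by case: estimator => _ [/(_ t) est _] /est []. Qed.

Lemma zero_prob_le1 t : - pi < t <= pi -> zero_prob t <= 1.
Proof.
move=> t_range; rewrite -(estimator_total t_range).
by apply: ler_sum_subset => // y; apply: nsq_ge0.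
Qed.

Lemma zero_prob0 : zero_prob 0 = 1.
Proof. by case: estimator => _ []. Qed.

Lemma zero_prob_far t :
  - pi < t <= pi -> Delta <= pi -> Delta <= `|t| -> zero_prob t <= 3^-1.
Proof.
move=> t_range Delta_le_pi Delta_le_t.
case: estimator => _ [/(_ t t_range) [_ err_le] _]; apply: le_trans err_le.
apply: ler_sum_subset => [y /eqP out_y|y]; last exact: nsq_ge0.
have t_le_pi : `|t| <= pi by rewrite ler_norml; case/andP: t_range => /ltW -> ->.
have := pi_ge2 R; rewrite /cdist out_y sub0r normrN le_min Delta_le_t /=; lra.
Qed.

End Estimator.

Section MainDetect.
Variables (R : realType) (n : nat) (W : 'M[R[i]]_n) (theta : 'I_n -> R).
Variables (Y : finType) (out : Y -> R) (amp : R -> Y -> R[i]) (T : R) (m : nat).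
Variables (U2 : 'M[R]_n) (phi0 mu : 'cV[R]_n).
Hypothesis W_unitary : adj W *m W = 1%:M.
Hypothesis W_eigen :
  map_mx (@toC R) (U2 *m U1 mu) *m W = W *m diag_mx (\row_k expi (theta k)).
Hypothesis theta_range : forall k, - pi < theta k <= pi.
Hypothesis estimator : is_estimator out amp T^-1.
Hypothesis U2_phi0 : U2 *m phi0 = phi0.

Local Notation w := (weight W phi0 mu).
Local Notation p k := (zero_prob out amp (theta k)).
Local Notation accept := (mainDetect_accept W theta out amp m phi0 mu).

Lemma mainDetect_acceptE :
  accept = vnorm2 (map_mx (@toC R) (mu *m mu^T *m phi0))
           + \sum_k w k * (1 - p k ^+ m).
Proof.
rewrite /mainDetect_accept -phitildeE; congr (_ + _).
rewrite -(unitary_expand W_unitary (map_mx _ (phitilde phi0 mu))).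
under eq_bigr do rewrite run_seqE // vnorm2_isometry // vnorm2_col.
under eq_bigr do under eq_bigr do rewrite nsq_prod.
rewrite exchange_big /=; apply: eq_bigr => k _.
rewrite -big_distrl /= sum_tuple_has_prod (estimator_total estimator) //.
rewrite expr1n mulrC /zero_prob; congr (_ * (_ - _ ^+ _)).
by apply: eq_bigl => y; rewrite negbK.
Qed.

Lemma total_weight :
  mu^T *m mu = 1%:M -> phi0^T *m phi0 = 1%:M ->
  vnorm2 (map_mx (@toC R) (mu *m mu^T *m phi0)) + \sum_k w k = 1.
Proof.
move=> mu_unit phi0_unit.
have -> : \sum_k w k = vnorm2 (map_mx (@toC R) (phitilde phi0 mu)).
  by rewrite -(unitary_expand W_unitary (map_mx _ _)) vnorm2_isometry.
by rewrite !vnorm2_toC phitildeE projection_pythagoras // phi0_unit mxE.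
Qed.

Lemma mainDetect_accept_orth : rdot phi0 mu = 0 -> accept = 0.
Proof.
move=> phi0_mu; have mu_phi0 : rdot mu phi0 = 0 by rewrite rdotC.
have phitilde_phi0 : phitilde phi0 mu = phi0.
  by rewrite /phitilde mu_phi0 scale0r subr0.
have U_phi0 : map_mx (@toC R) (U2 *m U1 mu) *m map_mx (@toC R) phi0
              = map_mx (@toC R) phi0.
  by rewrite -map_toCM orth_U2U1_fixed.
rewrite mainDetect_acceptE -mulmxA rdot_mx mu_phi0 mul_mx_scalar scale0r.
rewrite vnorm2_toC mulmx0 mxE add0r; apply: big1 => k _.
have [->|w_neq0] := eqVneq (w k) 0; first by rewrite mul0r.
have theta_k : theta k = 0.
  apply: expi_eq1 (theta_range k) _.
  apply: (eigencoord_fixed W_unitary W_eigen U_phi0).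
  by apply: contra w_neq0; rewrite /weight phitilde_phi0 => /eqP ->; rewrite nsq0.
by rewrite theta_k (zero_prob0 estimator) expr1n subrr mulr0.
Qed.

Lemma mainDetect_accept_ge (eps : R) :
  U2^T *m U2 = 1%:M ->
  (forall v : 'cV[R]_n, U2 *m v = v -> exists a : R, v = a *: phi0) ->
  mu^T *m mu = 1%:M -> phi0^T *m phi0 = 1%:M ->
  0 <= eps -> 1 <= T -> QHT W theta phi0 mu eps <= T -> 3^-1 ^+ m <= eps ->
  rdot phi0 mu != 0 -> 1 - 2 * eps <= accept.
Proof.
move=> U2_orth fixed_U2 mu_unit phi0_unit eps_ge0 T_ge1 QHT_le q_le phi0_mu.
have theta_neq0 k : theta k != 0.
  apply: (eigenphase_neq0 W_unitary k W_eigen) => v.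
  by apply: (U2U1_fixed_eq0 U2_orth U2_phi0 fixed_U2); rewrite rdotC.
have total := total_weight mu_unit phi0_unit.
have w_le1 : \sum_k w k <= 1.
  by rewrite -total lerDr; apply: sumr_ge0 => i _; apply: nsq_ge0.
have -> : accept = 1 - \sum_k w k * p k ^+ m.
  rewrite mainDetect_acceptE -[in RHS]total -addrA -sumrB.
  by congr (_ + _); apply: eq_bigr => k _; rewrite mulrBr mulr1.
rewrite lerD2l lerN2.
have T_gt0 : 0 < T by apply: lt_le_trans T_ge1.
have Tinv_le_pi : T^-1 <= pi.
  have : T^-1 <= 1 by rewrite invf_le1.
  by have := pi_ge2 R; lra.
apply: (@le_trans _ _ (\sum_k (w k * (if T < `|theta k|^-1 then 1 else 0)
                               + w k * 3^-1 ^+ m))).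
  apply: ler_sum => k _; apply: weighted_expr_le.
  - exact: weight_ge0.
  - by rewrite zero_prob_ge0 (zero_prob_le1 estimator).
  - by rewrite invr_ge0.
  rewrite -leNgt => theta_inv_le; apply: (zero_prob_far estimator) => //.
  by rewrite -invf_ple ?posrE ?normr_gt0.
rewrite big_split -big_distrl /= mulr_natl mulr2n; apply: lerD.
  exact: QHT_tail_le.
by apply: le_trans q_le; rewrite ler_piMl ?exprn_ge0 ?invr_ge0.
Qed.

End MainDetect.

Lemma exprV_le_ln (R : realType) (b eps : R) m : 1 < b -> 0 < eps ->
  (ln b)^-1 * ln eps^-1 <= m%:R -> b^-1 ^+ m <= eps.
Proof.
move=> b_gt1 eps_gt0; have b_gt0 : 0 < b by apply: lt_trans b_gt1.
rewrite ler_pdivrMl ?ln_gt0 // mulrC mulr_natl -lnXn //.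
rewrite ler_ln ?posrE ?invr_gt0 ?exprn_gt0 // => le_bm.
by rewrite exprVn invf_ple ?posrE ?exprn_gt0.
Qed.

Theorem corollary1 (R : realType) :
  exists c Cst : R, 0 < c /\ 0 < Cst /\
  forall (n : nat) (U2 : 'M[R]_n) (phi0 mu : 'cV[R]_n),
    U2^T *m U2 = 1%:M -> U2 *m U2^T = 1%:M ->
    phi0^T *m phi0 = 1%:M -> U2 *m phi0 = phi0 ->
    (forall v : 'cV[R]_n, U2 *m v = v -> exists a : R, v = a *: phi0) ->
    mu^T *m mu = 1%:M ->
    forall (W : 'M[R[i]]_n) (theta : 'I_n -> R),
      adj W *m W = 1%:M ->
      map_mx (@toC R) (U2 *m U1 mu) *m W = W *m diag_mx (\row_k expi (theta k)) ->
      (forall k, - pi < theta k <= pi) ->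
    forall eps T : R, 0 < eps < 1 ->
      Num.max 1 (QHT W theta phi0 mu eps) <= T ->
    forall (Y : finType) (out : Y -> R) (amp : R -> Y -> R[i]),
      is_estimator out amp T^-1 ->
    forall m : nat, c * ln eps^-1 <= m%:R ->
      (rdot phi0 mu != 0 ->
         1 - Cst * eps <= mainDetect_accept W theta out amp m phi0 mu) /\
      (rdot phi0 mu = 0 ->
         mainDetect_accept W theta out amp m phi0 mu = 0).
Proof.
exists (ln 3)^-1, 2; split; first by rewrite invr_gt0 ln_gt0 // ltr1n.
split=> // n U2 phi0 mu U2_orth _ phi0_unit U2_phi0 fixed_U2 mu_unit W theta
  W_unitary W_eigen theta_range eps T /andP[eps_gt0 _] le_T Y out amp estimator
  m m_ge.
move: le_T; rewrite ge_max => /andP[T_ge1 QHT_le].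
have q_le : 3^-1 ^+ m <= eps by apply: exprV_le_ln; rewrite ?ltr1n.
split.
  exact: (mainDetect_accept_ge W_unitary W_eigen theta_range estimator U2_phi0
            U2_orth fixed_U2 mu_unit phi0_unit (ltW eps_gt0) T_ge1 QHT_le q_le).
exact: (mainDetect_accept_orth m W_unitary W_eigen theta_range estimator U2_phi0).
Qed.
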